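(* Let $X$ be a compact metric space and $f\colon X\to X$ continuous. If $f$ is expansive and $(X,f)$ has the shadowing property, then $(X,f)$ has $\gamma$-restricted two-sided orbital limit shadowing.
   Context: $f$ is expansive if there is $c>0$ such that for distinct $x,y\in X$ there exists $k\ge0$ with $d(f^k(x),f^k(y))\ge c$. $(X,f)$ has shadowing if for every $\epsilon>0$ there is $\delta>0$ such that for every sequence $\langle x_i\rangle_{i\ge0}$ with $d(f(x_i),x_{i+1})<\delta$ for all $i$ there is $z\in X$ with $d(f^i(z),x_i)<\epsilon$ for all $i\ge0$. A full trajectory is $\langle z_i\rangle_{i\in\mathbb Z}$ with $f(z_i)=z_{i+1}$. For two-sided sequences, $\omega(\langle x_i\rangle)=\bigcap_{M}\overline{\{x_n:n>M\}}$ and $\alpha(\langle x_i\rangle)=\bigcap_M\overline{\{x_n:n<-M\}}$. A two-sided asymptotic pseudo-orbit is $\langle x_i\rangle_{i\in\mathbb Z}$ with $d(f(x_i),x_{i+1})\to0$ as $i\to\pm\infty$. $\gamma$-restricted two-sided orbital limit shadowing: for every two-sided asymptotic pseudo-orbit $\langle x_i\rangle$ with $\alpha(\langle x_i\rangle)=\omega(\langle x_i\rangle)$ there is a full trajectory $\langle z_i\rangle$ with $\alpha(\langle z_i\rangle)=\alpha(\langle x_i\rangle)$ and $\omega(\langle z_i\rangle)=\omega(\langle x_i\rangle)$. *)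

From Stdlib Require Import Reals ZArith List.
Open Scope R_scope.

Record MetricSpace := {
  mcarrier :> Type;
  mdist : mcarrier -> mcarrier -> R;
  mdist_nonneg : forall x y, 0 <= mdist x y;
  mdist_eq0 : forall x y, mdist x y = 0 <-> x = y;
  mdist_sym : forall x y, mdist x y = mdist y x;
  mdist_tri : forall x y z, mdist x z <= mdist x y + mdist y z
}.

Arguments mdist {m}.

Section MetricDefs.
Variable X : MetricSpace.

Definition mopen (U : X -> Prop) : Prop :=
  forall x, U x -> exists e, 0 < e /\ forall y, mdist x y < e -> U y.

Definition mcompact : Prop :=
  forall (I : Type) (U : I -> X -> Prop),
    (forall i, mopen (U i)) -> (forall x, exists i, U i x) ->
    exists l : list I, forall x, exists i, In i l /\ U i x.

Definition mcontinuous (f : X -> X) : Prop :=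
  forall x e, 0 < e -> exists d, 0 < d /\
    forall y, mdist x y < d -> mdist (f x) (f y) < e.

Definition iter (f : X -> X) (k : nat) (x : X) : X := Nat.iter k f x.

Definition expansive (f : X -> X) : Prop :=
  exists c, 0 < c /\ forall x y : X, x <> y ->
    exists k : nat, c <= mdist (iter f k x) (iter f k y).

Definition shadowing (f : X -> X) : Prop :=
  forall eps, 0 < eps -> exists delta, 0 < delta /\
    forall xs : nat -> X,
      (forall i, mdist (f (xs i)) (xs (S i)) < delta) ->
      exists z : X, forall i, mdist (iter f i z) (xs i) < eps.

Definition closure (S : X -> Prop) : X -> Prop :=
  fun p => forall e, 0 < e -> exists y, S y /\ mdist p y < e.

Definition omega_set (xs : Z -> X) : X -> Prop :=
  fun p => forall M : Z, closure (fun y => exists n : Z, (n > M)%Z /\ y = xs n) p.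

Definition alpha_set (xs : Z -> X) : X -> Prop :=
  fun p => forall M : Z, closure (fun y => exists n : Z, (n < - M)%Z /\ y = xs n) p.

Definition set_eq (A B : X -> Prop) : Prop := forall p, A p <-> B p.

Definition full_trajectory (f : X -> X) (zs : Z -> X) : Prop :=
  forall i : Z, f (zs i) = zs (i + 1)%Z.

Definition two_sided_asymptotic_pseudo_orbit (f : X -> X) (xs : Z -> X) : Prop :=
  forall e, 0 < e -> exists N : nat, forall i : Z,
    (Z.of_nat N <= Z.abs i)%Z -> mdist (f (xs i)) (xs (i + 1)%Z) < e.

Definition gamma_restricted_two_sided_orbital_limit_shadowing (f : X -> X) : Prop :=
  forall xs : Z -> X,
    two_sided_asymptotic_pseudo_orbit f xs ->
    set_eq (alpha_set xs) (omega_set xs) ->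
    exists zs : Z -> X, full_trajectory f zs /\
      set_eq (alpha_set zs) (alpha_set xs) /\
      set_eq (omega_set zs) (omega_set xs).

End MetricDefs.

(* Since alpha = omega is nonempty (compactness), the pseudo-orbit returns close to its own
   past: some x_K with K >> 0 is close to some x_m with m << 0.  Cutting out the block
   [m, K) gives a two-sided delta-pseudo-orbit y with the same limit sets which is still
   asymptotic.  Shadowing the forward halves of y, made coherent by expansivity (a shadowing
   point is unique), yields a full trajectory z that c/4-shadows y.  Uniform expansivity and
   shadowing of long finite segments of y then force d(z_n, y_n) -> 0 as n -> +-oo, so z
   and y have the same alpha- and omega-limit sets. *)
From Stdlib Require Import Reals ZArith List Lia Lra.
From Stdlib Require Import Classical IndefiniteDescription.
Open Scope R_scope.

Section Theory.

Variable X : MetricSpace.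

Lemma mdist_refl (x : X) : mdist x x = 0.
Proof. now apply mdist_eq0. Qed.

Lemma mball_open (p : X) (e : R) : mopen X (fun y => mdist p y < e).
Proof.
  intros x Hx. exists (e - mdist p x). split; [lra|].
  intros y Hy. pose proof (mdist_tri X p x y). lra.
Qed.

Definition cluster_point (s : nat -> X) (p : X) : Prop :=
  forall e, 0 < e -> forall M, exists n, (M <= n)%nat /\ mdist (s n) p < e.

Lemma compact_cluster_point (s : nat -> X) : mcompact X -> exists p, cluster_point s p.
Proof.
  intros Hc. apply NNPP. intros Hno.
  assert (Hfar : forall p, exists eM : R * nat, 0 < fst eM /\
            forall n, (snd eM <= n)%nat -> fst eM <= mdist (s n) p).
  { intros p. apply NNPP. intros Hn. apply Hno. exists p. intros e He M.
    apply NNPP. intros Hn2. apply Hn. exists (e, M). split; [exact He|].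
    intros n Hn3. apply Rnot_lt_le. intros Hlt. apply Hn2. now exists n. }
  destruct (functional_choice _ Hfar) as [eM HeM].
  destruct (Hc X (fun p y => mdist p y < fst (eM p))) as [l Hl].
  - intros p. apply mball_open.
  - intros x. exists x. rewrite mdist_refl. apply HeM.
  - set (M := fold_right (fun p acc => Nat.max (snd (eM p)) acc) 0%nat l).
    assert (HM : forall p, In p l -> (snd (eM p) <= M)%nat).
    { unfold M; clear. induction l as [|a l IH]; simpl; intros p Hp; [contradiction|].
      destruct Hp as [<-|Hp]; [lia|]. specialize (IH p Hp). lia. }
    destruct (Hl (s M)) as [p [Hin Hp]].
    pose proof (proj2 (HeM p) M (HM p Hin)). rewrite mdist_sym in Hp. lra.
Qed.

Lemma compact_joint_cluster_point (a b : nat -> X) : mcompact X ->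
  exists p q, forall e, 0 < e -> forall M, exists n, (M <= n)%nat /\
    mdist (a n) p < e /\ mdist (b n) q < e.
Proof.
  intros Hc. destruct (compact_cluster_point a Hc) as [p Hp].
  (* along a subsequence [g] with [a (g k) -> p], take a cluster point of [b (g k)] *)
  assert (Hg : forall k, exists n, (k <= n)%nat /\ mdist (a n) p < / INR (S k)).
  { intros k. apply Hp. apply Rinv_0_lt_compat, lt_0_INR. lia. }
  destruct (functional_choice _ Hg) as [g Hgk].
  destruct (compact_cluster_point (fun k => b (g k)) Hc) as [q Hq].
  exists p, q. intros e He M.
  destruct (archimed_cor1 e He) as [K [HK HK0]].
  destruct (Hq e He (Nat.max M K)) as [k [Hk Hbk]].
  destruct (Hgk k) as [Hgk1 Hgk2].
  exists (g k). repeat split; [lia| |exact Hbk].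
  enough (/ INR (S k) <= / INR K) by lra.
  apply Rinv_le_contravar; [apply lt_0_INR; lia|]. apply le_INR. lia.
Qed.

Lemma compact_omega_set_nonempty (xs : Z -> X) : mcompact X -> exists q, omega_set X xs q.
Proof.
  intros Hc. destruct (compact_cluster_point (fun n => xs (Z.of_nat n)) Hc) as [q Hq].
  exists q. intros M e He. destruct (Hq e He (S (Z.to_nat M))) as [n [Hn Hd]].
  exists (xs (Z.of_nat n)). split; [exists (Z.of_nat n); split; [lia|reflexivity]|].
  now rewrite mdist_sym.
Qed.

Lemma limit_sets_return (xs : Z -> X) : mcompact X ->
  set_eq X (alpha_set X xs) (omega_set X xs) ->
  forall M e, 0 < e -> exists m K, (m < - M)%Z /\ (M < K)%Z /\ mdist (xs m) (xs K) < e.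
Proof.
  intros Hc Hax M e He.
  destruct (compact_omega_set_nonempty xs Hc) as [q Hq].
  destruct (Hq M (e / 2) ltac:(lra)) as [y [[K [HK ->]] HqK]].
  destruct (proj2 (Hax q) Hq M (e / 2) ltac:(lra)) as [y [[m [Hm ->]] Hqm]].
  exists m, K. repeat split; try lia.
  pose proof (mdist_tri X (xs m) q (xs K)). rewrite (mdist_sym X (xs m) q) in H. lra.
Qed.

Lemma alpha_set_reflect (u : Z -> X) p :
  alpha_set X u p <-> omega_set X (fun n => u (- n)%Z) p.
Proof.
  split; intros H M e He; destruct (H M e He) as [y [[n [Hn ->]] Hd]].
  - exists (u n). split; [|exact Hd]. exists (- n)%Z. split; [lia|]. now rewrite Z.opp_involutive.
  - exists (u (- n)%Z). split; [|exact Hd]. exists (- n)%Z. split; [lia|reflexivity].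
Qed.

Definition tail_approx (u v : Z -> X) : Prop :=
  forall eta, 0 < eta -> forall M : Z, exists M' : Z, forall n, (n > M')%Z ->
    exists n', (n' > M)%Z /\ mdist (u n) (v n') < eta.

Lemma omega_set_tail_approx u v : tail_approx u v ->
  forall p, omega_set X u p -> omega_set X v p.
Proof.
  intros T p Hp M e He. destruct (T (e / 2) ltac:(lra) M) as [M' HM'].
  destruct (Hp M' (e / 2) ltac:(lra)) as [y [[n [Hn ->]] Hd]].
  destruct (HM' n Hn) as [n' [Hn' Hd']]. exists (v n'). split; [now exists n'|].
  pose proof (mdist_tri X p (u n) (v n')). lra.
Qed.

Lemma omega_set_eq_forward_asymptotic (u v : Z -> X) :
  (forall eta, 0 < eta -> exists J : Z, forall n, (J <= n)%Z -> mdist (u n) (v n) < eta) ->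
  set_eq X (omega_set X u) (omega_set X v).
Proof.
  intros H p. split; apply omega_set_tail_approx; intros eta He M;
    destruct (H eta He) as [J HJ]; exists (Z.max M J); intros n Hn;
    exists n; (split; [lia|]).
  - apply HJ; lia.
  - rewrite mdist_sym. apply HJ; lia.
Qed.

Lemma omega_set_eq_shift (u v : Z -> X) m s :
  (forall i, (i >= m)%Z -> v i = u (i + s)%Z) -> set_eq X (omega_set X v) (omega_set X u).
Proof.
  intros H p. split; apply omega_set_tail_approx; intros eta He M.
  - exists (Z.max m (M - s)). intros n Hn. exists (n + s)%Z. split; [lia|].
    rewrite H by lia. now rewrite mdist_refl.
  - exists (Z.max (m + s) (M + s)). intros n Hn. exists (n - s)%Z. split; [lia|].
    rewrite H by lia. replace (n - s + s)%Z with n by lia. now rewrite mdist_refl.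
Qed.

Lemma alpha_set_eq_agree (u v : Z -> X) m :
  (forall i, (i < m)%Z -> u i = v i) -> set_eq X (alpha_set X u) (alpha_set X v).
Proof.
  intros H p. rewrite !alpha_set_reflect.
  apply (omega_set_eq_shift (fun n => v (- n)%Z) (fun n => u (- n)%Z) (1 - m) 0).
  intros i Hi. rewrite Z.add_0_r. apply H. lia.
Qed.

Definition asymptotic (u v : Z -> X) : Prop :=
  forall eta, 0 < eta -> exists J : Z, forall n, (J <= Z.abs n)%Z -> mdist (u n) (v n) < eta.

Lemma asymptotic_limit_sets (u v : Z -> X) : asymptotic u v ->
  set_eq X (alpha_set X u) (alpha_set X v) /\ set_eq X (omega_set X u) (omega_set X v).
Proof.
  intros H. split.
  - intros p. rewrite !alpha_set_reflect. revert p.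
    apply omega_set_eq_forward_asymptotic. intros eta He.
    destruct (H eta He) as [J HJ]. exists J. intros n Hn. apply HJ. lia.
  - apply omega_set_eq_forward_asymptotic. intros eta He.
    destruct (H eta He) as [J HJ]. exists J. intros n Hn. apply HJ. lia.
Qed.

Definition splice (xs : Z -> X) (m K : Z) (i : Z) : X :=
  if Z.ltb i m then xs i else xs (i - m + K)%Z.

Lemma splice_alpha_set xs m K :
  set_eq X (alpha_set X (splice xs m K)) (alpha_set X xs).
Proof.
  apply (alpha_set_eq_agree _ _ m). intros i Hi. unfold splice.
  destruct (Z.ltb_spec i m); [reflexivity|lia].
Qed.

Lemma splice_omega_set xs m K :
  set_eq X (omega_set X (splice xs m K)) (omega_set X xs).
Proof.
  apply (omega_set_eq_shift _ _ m (K - m)). intros i Hi. unfold splice.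
  destruct (Z.ltb_spec i m); [lia|]. f_equal. lia.
Qed.

Section Dynamics.

Variable f : X -> X.

Lemma iter_add a b x : iter X f (a + b) x = iter X f a (iter X f b x).
Proof. apply Nat.iter_add. Qed.

Lemma iter_continuous : mcontinuous X f -> forall k, mcontinuous X (iter X f k).
Proof.
  intros Hf k. induction k as [|k IH]; intros x e He.
  - exists e. split; [exact He|]. intros y Hy. exact Hy.
  - destruct (Hf (iter X f k x) e He) as [d1 [Hd1 H1]].
    destruct (IH x d1 Hd1) as [d2 [Hd2 H2]].
    exists d2. split; [exact Hd2|]. intros y Hy. apply H1, H2, Hy.
Qed.

Lemma full_trajectory_iter z : full_trajectory X f z ->
  forall i j, iter X f i (z j) = z (j + Z.of_nat i)%Z.
Proof.
  intros Hz i. induction i as [|i IH]; intros j.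
  - simpl. f_equal. lia.
  - change (f (iter X f i (z j)) = z (j + Z.of_nat (S i))%Z).
    rewrite IH, Hz. f_equal. lia.
Qed.

Lemma shadowing_finite : shadowing X f -> forall eps, 0 < eps -> exists delta, 0 < delta /\
  forall (s : nat -> X) L, (forall i, (i < L)%nat -> mdist (f (s i)) (s (S i)) < delta) ->
  exists w, forall i, (i <= L)%nat -> mdist (iter X f i w) (s i) < eps.
Proof.
  intros Hsh eps Heps. destruct (Hsh eps Heps) as [delta [Hdelta Hs]].
  exists delta. split; [exact Hdelta|]. intros s L Hjump.
  (* continue the segment by the true orbit of its endpoint *)
  destruct (Hs (fun i => if Nat.leb i L then s i else iter X f (i - L) (s L))) as [w Hw].
  - intros i. destruct (Nat.leb_spec i L), (Nat.leb_spec (S i) L).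
    + apply Hjump. lia.
    + replace (S i - L)%nat with 1%nat by lia. replace i with L by lia.
      simpl. now rewrite mdist_refl.
    + lia.
    + replace (S i - L)%nat with (S (i - L)) by lia. simpl. now rewrite mdist_refl.
  - exists w. intros i Hi. specialize (Hw i). now rewrite (proj2 (Nat.leb_le i L) Hi) in Hw.
Qed.

Lemma splice_pseudo_orbit xs (N : Z) m K delta :
  (forall i, (N <= Z.abs i)%Z -> mdist (f (xs i)) (xs (i + 1)%Z) < delta / 2) ->
  (m < - N)%Z -> (N < K)%Z -> mdist (xs m) (xs K) < delta / 2 ->
  forall i, mdist (f (splice xs m K i)) (splice xs m K (i + 1)) < delta.
Proof.
  intros HN Hm HK HmK i. unfold splice.
  pose proof (mdist_nonneg X (xs m) (xs K)).
  destruct (Z.ltb_spec i m), (Z.ltb_spec (i + 1) m); try lia.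
  - assert (mdist (f (xs i)) (xs (i + 1)%Z) < delta / 2) by (apply HN; lia). lra.
  - replace (i + 1 - m + K)%Z with K by lia.
    assert (Hjump : mdist (f (xs i)) (xs m) < delta / 2).
    { replace m with (i + 1)%Z by lia. apply HN. lia. }
    pose proof (mdist_tri X (f (xs i)) (xs m) (xs K)). lra.
  - replace (i + 1 - m + K)%Z with ((i - m + K) + 1)%Z by lia.
    assert (mdist (f (xs (i - m + K)%Z)) (xs ((i - m + K) + 1)%Z) < delta / 2)
      by (apply HN; lia). lra.
Qed.

Lemma splice_asymptotic_pseudo_orbit xs m K :
  two_sided_asymptotic_pseudo_orbit X f xs ->
  two_sided_asymptotic_pseudo_orbit X f (splice xs m K).
Proof.
  intros Hx e He. destruct (Hx e He) as [N HN].
  exists (N + Z.to_nat (Z.abs m) + Z.to_nat (Z.abs K) + 2)%nat. intros i Hi. unfold splice.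
  destruct (Z.ltb_spec i m), (Z.ltb_spec (i + 1) m); try lia.
  - apply HN. lia.
  - replace (i + 1 - m + K)%Z with ((i - m + K) + 1)%Z by lia. apply HN. lia.
Qed.

Section Expansive.

Variable c : R.
Hypothesis c_pos : 0 < c.
Hypothesis f_expansive : forall x y : X, x <> y ->
  exists k, c <= mdist (iter X f k x) (iter X f k y).

Lemma expansive_shadow_unique (s : nat -> X) a b :
  (forall i, mdist (iter X f i a) (s i) < c / 2) ->
  (forall i, mdist (iter X f i b) (s i) < c / 2) -> a = b.
Proof.
  intros Ha Hb. apply NNPP. intros Hne. destruct (f_expansive a b Hne) as [k Hk].
  specialize (Ha k). specialize (Hb k).
  pose proof (mdist_tri X (iter X f k a) (s k) (iter X f k b)).
  rewrite (mdist_sym X (s k)) in H. lra.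
Qed.

Lemma expansive_uniform : mcompact X -> mcontinuous X f ->
  forall g, 0 < g -> exists L : nat, forall a b : X,
    (forall i, (i <= L)%nat -> mdist (iter X f i a) (iter X f i b) <= c / 2) -> mdist a b < g.
Proof.
  intros Hc Hf g Hg. apply NNPP. intros Hno.
  assert (Hbad : forall L : nat, exists ab : X * X,
    (forall i, (i <= L)%nat -> mdist (iter X f i (fst ab)) (iter X f i (snd ab)) <= c / 2)
    /\ g <= mdist (fst ab) (snd ab)).
  { intros L. apply NNPP. intros Hn. apply Hno. exists L. intros a b Hab.
    apply Rnot_le_lt. intros Hle. apply Hn. now exists (a, b). }
  destruct (functional_choice _ Hbad) as [ab Hab].
  destruct (compact_joint_cluster_point (fun n => fst (ab n)) (fun n => snd (ab n)) Hc)
    as [p [q Hpq]].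
  assert (Hne : p <> q).
  { intros <-. destruct (Hpq (g / 2) ltac:(lra) 0%nat) as [n [_ [H1 H2]]].
    destruct (Hab n) as [_ H3].
    pose proof (mdist_tri X (fst (ab n)) p (snd (ab n))).
    rewrite (mdist_sym X p (snd (ab n))) in H. lra. }
  destruct (f_expansive p q Hne) as [k Hk].
  destruct (iter_continuous Hf k p (c / 4) ltac:(lra)) as [d1 [Hd1 H1]].
  destruct (iter_continuous Hf k q (c / 4) ltac:(lra)) as [d2 [Hd2 H2]].
  destruct (Hpq (Rmin d1 d2) (Rmin_pos _ _ Hd1 Hd2) k) as [n [Hn [Ha Hb]]].
  pose proof (Rmin_l d1 d2). pose proof (Rmin_r d1 d2).
  rewrite mdist_sym in Ha, Hb.
  specialize (H1 (fst (ab n)) ltac:(lra)). specialize (H2 (snd (ab n)) ltac:(lra)).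
  destruct (Hab n) as [Hclose _]. specialize (Hclose k Hn).
  pose proof (mdist_tri X (iter X f k p) (iter X f k (fst (ab n))) (iter X f k q)).
  pose proof (mdist_tri X (iter X f k (fst (ab n))) (iter X f k (snd (ab n))) (iter X f k q)).
  rewrite (mdist_sym X (iter X f k q)) in H2. lra.
Qed.

Lemma pseudo_orbit_shadowed_by_trajectory (y : Z -> X) delta :
  (forall xs : nat -> X, (forall i, mdist (f (xs i)) (xs (S i)) < delta) ->
    exists z : X, forall i, mdist (iter X f i z) (xs i) < c / 4) ->
  (forall i, mdist (f (y i)) (y (i + 1)%Z) < delta) ->
  exists z, full_trajectory X f z /\ forall j, mdist (z j) (y j) < c / 4.
Proof.
  intros Hsh Hy.
  assert (Hw : forall N : nat, exists w, forall i : nat,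
    mdist (iter X f i w) (y (Z.of_nat i - Z.of_nat N)%Z) < c / 4).
  { intros N. apply Hsh. intros i.
    replace (Z.of_nat (S i) - Z.of_nat N)%Z with ((Z.of_nat i - Z.of_nat N) + 1)%Z by lia.
    apply Hy. }
  destruct (functional_choice _ Hw) as [w Hw'].
  (* [f^k (w (N + k))] and [w N] shadow the same sequence *)
  assert (Hcoh : forall N k, iter X f k (w (N + k)%nat) = w N).
  { intros N k. apply (expansive_shadow_unique (fun i => y (Z.of_nat i - Z.of_nat N)%Z));
      intros i.
    - rewrite <- iter_add.
      replace (Z.of_nat i - Z.of_nat N)%Z with (Z.of_nat (i + k) - Z.of_nat (N + k))%Z by lia.
      specialize (Hw' (N + k)%nat (i + k)%nat). lra.
    - specialize (Hw' N i). lra. }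
  exists (fun j => iter X f (Z.to_nat j) (w (Z.to_nat (- j)))). split.
  - intros j. destruct (Z_lt_le_dec j 0).
    + replace (Z.to_nat j) with 0%nat by lia. replace (Z.to_nat (j + 1)) with 0%nat by lia.
      replace (Z.to_nat (- j)) with (Z.to_nat (- (j + 1)) + 1)%nat by lia.
      exact (Hcoh (Z.to_nat (- (j + 1))) 1%nat).
    + replace (Z.to_nat (- j)) with 0%nat by lia.
      replace (Z.to_nat (- (j + 1))) with 0%nat by lia.
      replace (Z.to_nat (j + 1)) with (S (Z.to_nat j)) by lia. reflexivity.
  - intros j. pose proof (Hw' (Z.to_nat (- j)) (Z.to_nat j)) as H.
    now replace (Z.of_nat (Z.to_nat j) - Z.of_nat (Z.to_nat (- j)))%Z with j in H by lia.
Qed.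

Lemma shadowing_trajectory_asymptotic (y z : Z -> X) :
  mcompact X -> mcontinuous X f -> shadowing X f ->
  two_sided_asymptotic_pseudo_orbit X f y -> full_trajectory X f z ->
  (forall j, mdist (z j) (y j) < c / 4) -> asymptotic z y.
Proof.
  intros Hc Hf Hsh Hy Hz Hzy eta Heta.
  set (e1 := Rmin (eta / 2) (c / 4)).
  assert (He1 : 0 < e1) by (apply Rmin_pos; lra).
  pose proof (Rmin_l (eta / 2) (c / 4)). pose proof (Rmin_r (eta / 2) (c / 4)).
  destruct (shadowing_finite Hsh e1 He1) as [d1 [Hd1 Hs1]].
  destruct (expansive_uniform Hc Hf (eta / 2) ltac:(lra)) as [L HL].
  destruct (Hy d1 Hd1) as [N1 HN1].
  exists (Z.of_nat N1 + Z.of_nat L)%Z. intros j Hj.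
  destruct (Hs1 (fun i => y (j + Z.of_nat i)%Z) L) as [w Hw].
  { intros i Hi. replace (j + Z.of_nat (S i))%Z with (j + Z.of_nat i + 1)%Z by lia.
    apply HN1. lia. }
  (* the orbits of [z j] and [w] stay [c/2]-close for [L] steps *)
  assert (Hzw : mdist (z j) w < eta / 2).
  { apply HL. intros i Hi. rewrite (full_trajectory_iter z Hz).
    specialize (Hw i Hi). specialize (Hzy (j + Z.of_nat i)%Z).
    pose proof (mdist_tri X (z (j + Z.of_nat i)%Z) (y (j + Z.of_nat i)%Z) (iter X f i w)).
    rewrite (mdist_sym X (y _) (iter X f i w)) in H1. unfold e1 in *. lra. }
  specialize (Hw 0%nat (Nat.le_0_l L)). simpl in Hw. rewrite Z.add_0_r in Hw.
  pose proof (mdist_tri X (z j) w (y j)). unfold e1 in *. lra.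
Qed.

End Expansive.
End Dynamics.
End Theory.

Theorem mainTheorem3 (X : MetricSpace) (f : X -> X) :
  mcompact X -> mcontinuous X f ->
  expansive X f -> shadowing X f ->
  gamma_restricted_two_sided_orbital_limit_shadowing X f.
Proof.
  intros Hc Hf [c [Hc0 Hexp]] Hsh xs Hx Hax.
  destruct (Hsh (c / 4) ltac:(lra)) as [delta [Hdelta Hsh0]].
  destruct (Hx (delta / 2) ltac:(lra)) as [N HN].
  destruct (limit_sets_return X xs Hc Hax (Z.of_nat N) (delta / 2) ltac:(lra))
    as [m [K [Hm [HK HmK]]]].
  set (y := splice X xs m K).
  pose proof (splice_pseudo_orbit X f xs (Z.of_nat N) m K delta HN Hm HK HmK) as Hy.
  destruct (pseudo_orbit_shadowed_by_trajectory X f c Hc0 Hexp y delta Hsh0 Hy)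
    as [z [Hz Hzy]].
  destruct (asymptotic_limit_sets X z y
    (shadowing_trajectory_asymptotic X f c Hc0 Hexp y z Hc Hf Hsh
       (splice_asymptotic_pseudo_orbit X f xs m K Hx) Hz Hzy)) as [Ha Ho].
  exists z. split; [exact Hz|]. split; intros p.
  - rewrite (Ha p). apply splice_alpha_set.
  - rewrite (Ho p). apply splice_omega_set.
Qed.
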